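(* Let $H$ be a connected graph, $G_n$ a graph with $N(H,G_n)>0$, $p_n\in(0,1)$, and $\varepsilon>0$. Define $$M_n=\sum_{\substack{A\subset V(G_n)\\1\le|A|\le|V(H)|}}t_H(A)\,\mathbf 1\{t_H(A)>\varepsilon p_n^{|A|}N(H,G_n)\}.$$ Then (a) $\frac{M_n}{2^{|V(H)|}-1}\le N(H,G_n)-N_\varepsilon^+(H,G_n)\le M_n$, and (b) $\mathbb P(T(H,G_n)\ne T_\varepsilon^+(H,G_n))\le\frac{M_n}{\varepsilon N(H,G_n)}$.
   Context: $G_n$ is a simple labeled graph on $V(G_n)=\{1,\dots,|V(G_n)|\}$ with adjacency $(a_{ij})$; $H=(V(H),E(H))$ with $|Aut(H)|$ automorphisms. $V(G_n)_k$ is the set of $k$-tuples of distinct vertices, $\bar{\mathbf s}$ the set of entries. $M_H(\mathbf s)=\prod_{(i,j)\in E(H)}a_{s_is_j}$, $N(H,G_n)=\frac1{|Aut(H)|}\sum_{\mathbf s\in V(G_n)_{|V(H)|}}M_H(\mathbf s)$, $t_H(A)=\frac1{|Aut(H)|}\sum_{\mathbf s:\bar{\mathbf s}\supseteq A}M_H(\mathbf s)$. $\{X_v\}$ i.i.d. Bernoulli$(p_n)$, $X_{\mathbf s}=\prod_uX_{s_u}$, $T(H,G_n)=\frac1{|Aut(H)|}\sum_{\mathbf s}M_H(\mathbf s)X_{\mathbf s}$. For $\mathbf s\in V(G_n)_{|V(H)|}$ let $b_\varepsilon(\mathbf s)=1$ if $t_H(A)\le\varepsilon p_n^{|A|}N(H,G_n)$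 for every nonempty $A\subseteq\bar{\mathbf s}$, and $b_\varepsilon(\mathbf s)=0$ otherwise. Set $T_\varepsilon^+(H,G_n)=\frac1{|Aut(H)|}\sum_{\mathbf s}M_H(\mathbf s)X_{\mathbf s}b_\varepsilon(\mathbf s)$ and $N_\varepsilon^+(H,G_n)=p_n^{-|V(H)|}\mathbb E[T_\varepsilon^+(H,G_n)]$. *)

From HB Require Import structures.
From mathcomp Require Import all_boot all_order all_fingroup all_algebra.
Set Implicit Arguments. Unset Strict Implicit. Unset Printing Implicit Defensive.
Import Order.TTheory GRing.Theory Num.Theory.
Local Open Scope ring_scope.

(* A k-tuple of distinct vertices is an injective s : {ffun 'I_k -> 'I_n}. *)

Definition autH (k : nat) (h : rel 'I_k) : nat :=
  #|[set sg : {perm 'I_k} | [forall i, forall j, h (sg i) (sg j) == h i j]]|.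

Definition tset (n k : nat) (s : {ffun 'I_k -> 'I_n}) : {set 'I_n} :=
  [set s i | i in [set: 'I_k]].

Definition MH (R : realFieldType) (n k : nat) (a : rel 'I_n) (h : rel 'I_k)
  (s : {ffun 'I_k -> 'I_n}) : R :=
  \prod_(i : 'I_k) \prod_(j : 'I_k | (i < j)%N && h i j) (a (s i) (s j) : nat)%:R.

Definition NH (R : realFieldType) (n k : nat) (a : rel 'I_n) (h : rel 'I_k) : R :=
  (autH h)%:R^-1 * \sum_(s : {ffun 'I_k -> 'I_n} | injectiveb s) MH R a h s.

Definition tH (R : realFieldType) (n k : nat) (a : rel 'I_n) (h : rel 'I_k)
  (A : {set 'I_n}) : R :=
  (autH h)%:R^-1 *
  \sum_(s : {ffun 'I_k -> 'I_n} | injectiveb s && (A \subset tset s)) MH R a h s.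

Definition beps (R : realFieldType) (n k : nat) (a : rel 'I_n) (h : rel 'I_k)
  (p eps : R) (s : {ffun 'I_k -> 'I_n}) : bool :=
  [forall A : {set 'I_n}, ((A != set0) && (A \subset tset s)) ==>
     (tH R a h A <= eps * p ^+ #|A| * NH R a h)].

(* Sample space: x : {ffun 'I_n -> bool}, X_v = x v.
   Law of i.i.d. Bernoulli(p): P({x}) = prod_v p^{x_v} (1-p)^{1-x_v}. *)
Definition Prob (R : realFieldType) (n : nat) (p : R) (x : {ffun 'I_n -> bool}) : R :=
  \prod_(v : 'I_n) (if x v then p else 1 - p).

Definition Expect (R : realFieldType) (n : nat) (p : R)
  (f : {ffun 'I_n -> bool} -> R) : R :=
  \sum_(x : {ffun 'I_n -> bool}) Prob p x * f x.

Definition Pr (R : realFieldType) (n : nat) (p : R)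
  (E : pred {ffun 'I_n -> bool}) : R :=
  \sum_(x : {ffun 'I_n -> bool} | E x) Prob p x.

Definition Xs (R : realFieldType) (n k : nat) (s : {ffun 'I_k -> 'I_n})
  (x : {ffun 'I_n -> bool}) : R :=
  \prod_(u : 'I_k) (x (s u) : nat)%:R.

Definition TH (R : realFieldType) (n k : nat) (a : rel 'I_n) (h : rel 'I_k)
  (x : {ffun 'I_n -> bool}) : R :=
  (autH h)%:R^-1 *
  \sum_(s : {ffun 'I_k -> 'I_n} | injectiveb s) MH R a h s * Xs R s x.

Definition THplus (R : realFieldType) (n k : nat) (a : rel 'I_n) (h : rel 'I_k)
  (p eps : R) (x : {ffun 'I_n -> bool}) : R :=
  (autH h)%:R^-1 *
  \sum_(s : {ffun 'I_k -> 'I_n} | injectiveb s)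
     MH R a h s * Xs R s x * (beps a h p eps s : nat)%:R.

Definition NHplus (R : realFieldType) (n k : nat) (a : rel 'I_n) (h : rel 'I_k)
  (p eps : R) : R :=
  p ^- k * Expect p (THplus a h p eps).

Definition Mn (R : realFieldType) (n k : nat) (a : rel 'I_n) (h : rel 'I_k)
  (p eps : R) : R :=
  \sum_(A : {set 'I_n} | (1 <= #|A| <= k)%N)
     tH R a h A * (nat_of_bool (eps * p ^+ #|A| * NH R a h < tH R a h A)%R)%:R.

Definition connected_graph (k : nat) (h : rel 'I_k) : Prop :=
  forall i j : 'I_k, connect h i j.

(* Every quantity is a sum over labelled copies s of H in G_n (injective maps,
   weighted by M_H(s) / |Aut H|).  Since E[X_s] = p^k, N - N^+ counts the copies
   with b_eps(s) = 0, while exchanging the sums in M_n counts each copy once for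
   every heavy nonempty A included in its vertex set: at least once when
   b_eps(s) = 0, never otherwise, and at most 2^k - 1 times.  For (b), T <> T^+
   forces a present copy with b_eps(s) = 0, hence a heavy A all of whose
   vertices are present; a union bound over A gives
   P(T <> T^+) <= sum_(A heavy) p^|A| <= sum_(A heavy) t_H(A) / (eps N). *)

From HB Require Import structures.
From mathcomp Require Import all_boot all_order all_fingroup all_algebra.
Import Order.TTheory GRing.Theory Num.Theory.
Local Open Scope ring_scope.
Set Implicit Arguments. Unset Strict Implicit. Unset Printing Implicit Defensive.

Lemma prod_nat_subset (R : comPzSemiRingType) (T : finType) (A : {set T})
    (f : T -> bool) :
  \prod_(v in A) (f v : nat)%:R = (A \subset [set v | f v] : nat)%:R :> R.
Proof.
case: (boolP (A \subset _)) => [/subsetP sub | /subsetPn [v vA]].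
  by apply: big1 => v /sub; rewrite inE => ->.
by rewrite inE => /negbTE fv; rewrite (bigD1 v vA) /= fv mul0r.
Qed.

Section BernoulliProduct.
Variables (R : realFieldType) (n : nat) (p : R).

Lemma Prob_ge0 (x : {ffun 'I_n -> bool}) : 0 <= p <= 1 -> 0 <= Prob p x.
Proof.
by case/andP=> p0 p1; apply: prodr_ge0 => v _; case: (x v); rewrite ?subr_ge0.
Qed.

Lemma ExpectZl c (f : {ffun 'I_n -> bool} -> R) :
  Expect p (fun x => c * f x) = c * Expect p f.
Proof. by rewrite /Expect mulr_sumr; apply: eq_bigr => x _; rewrite mulrCA. Qed.

Lemma ExpectZr c (f : {ffun 'I_n -> bool} -> R) :
  Expect p (fun x => f x * c) = Expect p f * c.
Proof.
by rewrite mulrC -ExpectZl; apply: eq_bigr => x _; rewrite [f x * c]mulrC.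
Qed.

Lemma Expect_sum (I : finType) (P : pred I) (F : I -> {ffun 'I_n -> bool} -> R) :
  Expect p (fun x => \sum_(i | P i) F i x) = \sum_(i | P i) Expect p (F i).
Proof.
by rewrite /Expect exchange_big /=; apply: eq_bigr => x _; rewrite mulr_sumr.
Qed.

Lemma Expect_prod_set (S : {set 'I_n}) :
  Expect p (fun x => \prod_(v in S) (x v : nat)%:R) = p ^+ #|S|.
Proof.
pose G v (b : bool) : R :=
  (if b then p else 1 - p) * (if v \in S then (b : nat)%:R else 1).
(* The sum over x of a product of per-coordinate factors factorises. *)
rewrite /Expect (eq_bigr (fun x : {ffun 'I_n -> bool} => \prod_v G v (x v)));
  last by move=> x _; rewrite /G big_split /= big_mkcond.
rewrite -bigA_distr_bigA /= -prodr_const [RHS]big_mkcond /=.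
apply: eq_bigr => v _; rewrite big_bool /G /=.
by case: (v \in S); rewrite ?mulr1 ?mulr0 ?addr0 // addrC subrK.
Qed.

Lemma Pr_le_Expect (E : pred {ffun 'I_n -> bool}) (f : {ffun 'I_n -> bool} -> R) :
  0 <= p <= 1 -> (forall x, 0 <= f x) -> (forall x, E x -> 1 <= f x) ->
  Pr p E <= Expect p f.
Proof.
move=> p01 f_ge0 f_ge1; rewrite /Pr /Expect [X in X <= _]big_mkcond /=.
apply: ler_sum => x _; case: ifP => Ex; last by rewrite mulr_ge0 ?Prob_ge0.
by rewrite -{1}[Prob p x]mulr1 ler_wpM2l ?Prob_ge0 ?f_ge1.
Qed.

End BernoulliProduct.

Lemma card_tset n k (s : {ffun 'I_k -> 'I_n}) : injectiveb s -> #|tset s| = k.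
Proof. by move=> /injectiveP s_inj; rewrite card_imset // cardsT card_ord. Qed.

Lemma card_tset_le n k (s : {ffun 'I_k -> 'I_n}) : (#|tset s| <= k)%N.
Proof. by rewrite (leq_trans (leq_imset_card _ _)) // cardsT card_ord. Qed.

Lemma Xs_tset (R : realFieldType) n k (s : {ffun 'I_k -> 'I_n}) x :
  injectiveb s -> Xs R s x = \prod_(v in tset s) (x v : nat)%:R.
Proof.
move=> /injectiveP s_inj; rewrite big_imset /=; last by move=> i j _ _ /s_inj.
by apply: eq_bigl => i; rewrite in_setT.
Qed.

Lemma Expect_Xs (R : realFieldType) n k (p : R) (s : {ffun 'I_k -> 'I_n}) :
  injectiveb s -> Expect p (Xs R s) = p ^+ k.
Proof.
move=> s_inj; rewrite -[in RHS](card_tset s_inj) -Expect_prod_set.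
by apply: eq_bigr => x _; rewrite Xs_tset.
Qed.

Section Counting.
Variables (R : realFieldType) (n k : nat) (a : rel 'I_n) (h : rel 'I_k) (p eps : R).
Implicit Types (s : {ffun 'I_k -> 'I_n}) (A : {set 'I_n}) (x : {ffun 'I_n -> bool}).

Definition copy_sum (f : {ffun 'I_k -> 'I_n} -> R) : R :=
  (autH h)%:R^-1 * \sum_(s : {ffun 'I_k -> 'I_n} | injectiveb s) MH R a h s * f s.

Lemma MH_ge0 s : 0 <= MH R a h s.
Proof. by apply: prodr_ge0 => i _; apply: prodr_ge0 => j _; apply: ler0n. Qed.

Lemma ler_copy_sum f g :
  (forall s, injectiveb s -> f s <= g s) -> copy_sum f <= copy_sum g.
Proof.
move=> le_fg; rewrite ler_wpM2l ?invr_ge0 ?ler0n //.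
by apply: ler_sum => s s_inj; rewrite ler_wpM2l ?MH_ge0 ?le_fg.
Qed.

Lemma copy_sum_ge0 f : (forall s, injectiveb s -> 0 <= f s) -> 0 <= copy_sum f.
Proof.
move=> f_ge0; rewrite mulr_ge0 ?invr_ge0 ?ler0n // sumr_ge0 // => s s_inj.
by rewrite mulr_ge0 ?MH_ge0 ?f_ge0.
Qed.

Lemma copy_sumB f g : copy_sum (fun s => f s - g s) = copy_sum f - copy_sum g.
Proof.
by rewrite -mulrBr -sumrB; congr (_ * _); apply: eq_bigr => s _; rewrite mulrBr.
Qed.

Lemma copy_sumZ c f : copy_sum (fun s => c * f s) = c * copy_sum f.
Proof.
rewrite mulrCA mulr_sumr; congr (_ * _).
by apply: eq_bigr => s _; rewrite mulrCA.
Qed.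

Lemma NH_copy_sum : NH R a h = copy_sum (fun _ => 1).
Proof. by congr (_ * _); apply: eq_bigr => s _; rewrite mulr1. Qed.

Lemma NHplus_copy_sum :
  p != 0 -> NHplus a h p eps = copy_sum (fun s => (beps a h p eps s : nat)%:R).
Proof.
move=> p_neq0; rewrite /NHplus ExpectZl Expect_sum mulrCA mulr_sumr.
congr (_ * _); apply: eq_bigr => s s_inj.
by rewrite ExpectZr ExpectZl Expect_Xs // mulrAC mulrCA mulVf ?mulr1 ?expf_neq0.
Qed.

Lemma NH_sub_NHplus : p != 0 ->
  NH R a h - NHplus a h p eps = copy_sum (fun s => (~~ beps a h p eps s : nat)%:R).
Proof.
move=> p_neq0; rewrite NH_copy_sum NHplus_copy_sum // -copy_sumB.
by congr (_ * _); apply: eq_bigr => s _; case: beps; rewrite ?subrr ?subr0.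
Qed.

Definition heavy A : bool := eps * p ^+ #|A| * NH R a h < tH R a h A.

Lemma bepsPn s :
  reflect (exists A, [/\ A != set0, A \subset tset s & heavy A]) (~~ beps a h p eps s).
Proof.
apply: (iffP forallPn) => [[A] | [A [A0 As hA]]].
  by rewrite negb_imply -ltNge => /andP[/andP[A0 As] hA]; exists A.
by exists A; rewrite A0 As /= -ltNge.
Qed.

Definition heavy_count s : nat :=
  #|[set A | [&& A != set0, A \subset tset s & heavy A]]|.

Lemma heavy_count_gt0 s : (0 < heavy_count s)%N = ~~ beps a h p eps s.
Proof.
apply/card_gt0P/bepsPn => [[A] | [A [A0 As hA]]]; last by exists A; rewrite inE A0 As.
by rewrite inE => /and3P[A0 As hA]; exists A.
Qed.

Lemma heavy_count_le s : (heavy_count s <= 2 ^ k - 1)%N.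
Proof.
have sub : [set A | [&& A != set0, A \subset tset s & heavy A]]
           \subset powerset (tset s) :\ set0.
  by apply/subsetP => A; rewrite !inE => /and3P[-> ->].
have card_P : #|powerset (tset s) :\ set0| = (2 ^ #|tset s| - 1)%N.
  by rewrite -card_powerset [in RHS](cardsD1 set0) powersetE sub0set add1n subn1.
rewrite (leq_trans (subset_leq_card sub)) // card_P.
by rewrite leq_sub2r // leq_pexp2l // card_tset_le.
Qed.

Lemma heavy_count_bounds s :
  (~~ beps a h p eps s <= heavy_count s <= (2 ^ k - 1) * ~~ beps a h p eps s)%N.
Proof.
rewrite -heavy_count_gt0; case: posnP => [-> // | hc_gt0].
by rewrite hc_gt0 muln1 heavy_count_le.
Qed.

Lemma heavy_countE s : heavy_count s =
  (\sum_(A : {set 'I_n} | (1 <= #|A| <= k)%N) ((A \subset tset s) && heavy A))%N.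
Proof.
rewrite /heavy_count -sum1dep_card [RHS]big_mkcond [LHS]big_mkcond /=.
apply: eq_bigr => A _.
case: (boolP (A \subset tset s)) => As; last by rewrite andbF; case: ifP.
by rewrite -card_gt0 (leq_trans (subset_leq_card As) (card_tset_le s)); case: (0 < _)%N.
Qed.

Lemma Mn_copy_sum : Mn a h p eps = copy_sum (fun s => (heavy_count s)%:R).
Proof.
rewrite /Mn /copy_sum.
under eq_bigr => A _ do rewrite -/(heavy A) {1}/tH -mulrA mulr_suml big_mkcondr /=.
rewrite -mulr_sumr exchange_big /=; congr (_ * _); apply: eq_bigr => s _.
rewrite heavy_countE natr_sum mulr_sumr; apply: eq_bigr => A _.
by case: (A \subset tset s); rewrite ?mulr0 ?mul0r.
Qed.

Lemma THplus_eq_TH x :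
  (forall s, injectiveb s -> tset s \subset [set v | x v] -> beps a h p eps s) ->
  THplus a h p eps x = TH R a h x.
Proof.
move=> b_on_support; congr (_ * _); apply: eq_bigr => s s_inj.
rewrite Xs_tset // prod_nat_subset.
case: (boolP (_ \subset _)) => sub; first by rewrite b_on_support // mulr1.
by rewrite mulr0 mul0r.
Qed.

Lemma TH_neq_THplus_heavy x : TH R a h x != THplus a h p eps x ->
  exists A, [/\ (1 <= #|A| <= k)%N, heavy A & A \subset [set v | x v]].
Proof.
move=> neq.
have [|/existsPn none] := boolP [exists s : {ffun 'I_k -> 'I_n},
    [&& injectiveb s, tset s \subset [set v | x v] & ~~ beps a h p eps s]].
  case/existsP=> s /and3P[s_inj sub /bepsPn[A [A0 As hA]]].
  exists A; split=> //; last exact: subset_trans sub.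
  by rewrite card_gt0 A0 (leq_trans (subset_leq_card As) (card_tset_le s)).
rewrite THplus_eq_TH ?eqxx // in neq => s s_inj sub.
by move: (none s); rewrite s_inj sub negbK.
Qed.

Lemma Pr_TH_neq_THplus_le : 0 <= p <= 1 ->
  Pr p (fun x => TH R a h x != THplus a h p eps x)
  <= \sum_(A : {set 'I_n} | (1 <= #|A| <= k)%N) (heavy A : nat)%:R * p ^+ #|A|.
Proof.
move=> p01.
pose f (x : {ffun 'I_n -> bool}) : R :=
  \sum_(A : {set 'I_n} | (1 <= #|A| <= k)%N)
    (heavy A : nat)%:R * \prod_(v in A) (x v : nat)%:R.
have f_ge0 x : 0 <= f x.
  by apply: sumr_ge0 => A _; rewrite mulr_ge0 ?prodr_ge0.
have f_ge1 x : TH R a h x != THplus a h p eps x -> 1 <= f x.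
  case/TH_neq_THplus_heavy => A [A_card hA Ax].
  rewrite /f (bigD1 A) //= hA prod_nat_subset Ax mul1r lerDl.
  by apply: sumr_ge0 => B _; rewrite mulr_ge0 ?prodr_ge0.
apply: le_trans (Pr_le_Expect p01 f_ge0 f_ge1) _.
by rewrite Expect_sum; under eq_bigr do rewrite ExpectZl Expect_prod_set.
Qed.

Lemma sum_heavy_le_Mn : 0 < eps * NH R a h ->
  \sum_(A : {set 'I_n} | (1 <= #|A| <= k)%N) (heavy A : nat)%:R * p ^+ #|A|
  <= Mn a h p eps / (eps * NH R a h).
Proof.
move=> eN_gt0; rewrite /Mn mulr_suml; apply: ler_sum => A _.
rewrite -/(heavy A); case: (boolP (heavy A)) => hA /=; last by rewrite mulr0 !mul0r.
by rewrite mulr1 mul1r ler_pdivlMr // mulrA [_ * eps]mulrC; apply: ltW.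
Qed.

End Counting.

Unset Implicit Arguments.

Theorem lemma3p1 (R : realFieldType) (n k : nat) (a : rel 'I_n) (h : rel 'I_k)
  (p eps : R) :
  symmetric a -> irreflexive a ->
  symmetric h -> irreflexive h -> connected_graph h ->
  0 < NH R a h -> 0 < p -> p < 1 -> 0 < eps ->
  (Mn a h p eps / (2%:R ^+ k - 1) <= NH R a h - NHplus a h p eps
   /\ NH R a h - NHplus a h p eps <= Mn a h p eps)
  /\ Pr p (fun x => TH R a h x != THplus a h p eps x)
     <= Mn a h p eps / (eps * NH R a h).
Proof.
(* Neither the graph axioms nor the connectivity of H play a role. *)
move=> _ _ _ _ _ NH_gt0 p_gt0 p_lt1 eps_gt0.
have p01 : 0 <= p <= 1 by rewrite !ltW.
split; last first.
  exact: le_trans (Pr_TH_neq_THplus_le a h eps p01)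
                  (sum_heavy_le_Mn p (mulr_gt0 eps_gt0 NH_gt0)).
have -> : 2%:R ^+ k - 1 = (2 ^ k - 1)%N%:R :> R by rewrite natrB ?expn_gt0 // natrX.
rewrite NH_sub_NHplus ?gt_eqF // Mn_copy_sum; split.
  have [-> | c_gt0] := posnP (2 ^ k - 1).
    by rewrite invr0 mulr0; apply: copy_sum_ge0.
  rewrite ler_pdivrMr ?ltr0n // mulrC -copy_sumZ; apply: ler_copy_sum => s _.
  by rewrite -natrM ler_nat; case/andP: (heavy_count_bounds a h p eps s).
apply: ler_copy_sum => s _; rewrite ler_nat.
by case/andP: (heavy_count_bounds a h p eps s).
Qed.
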